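(* Let $V_1,V_2:\mathbb{R}\to\mathbb{R}$ satisfy the assumptions (C1), (C2) below, let $k(x,y)=e^{-V_1(y)-V_2(y-x)}$, let $\lambda>0$ be the spectral radius of the integral operator $(\mathcal{K}f)(x)=\int_\mathbb{R} k(x,y)f(y)\,dy$ on $L^2(\mathbb{R})$, and let $v$ be a positive right eigenfunction, $v(x)=\lambda^{-1}\int_\mathbb{R} k(x,y)v(y)\,dy$ for all $x$. Let $p(x,y)=\frac{k(x,y)v(y)}{\lambda v(x)}$. For $a,b\in\mathbb{R}$, under a probability $\mathbf{P}^{(a,b)}$ let $(Y_n)_{n\ge0}$ be a Markov chain on $\mathbb{R}$ with $Y_0=a$ and transition kernel $p(x,y)\,dy$, and let $W_0=b$, $W_n=b+Y_1+\dots+Y_n$. Then for every $n\in\mathbb{N}$, setting $w_{-1}:=b-a$ and $w_0:=b$, $$\mathbf{P}^{(a,b)}\big((W_1,\dots,W_n)\in(dw_1,\dots,dw_n)\big)=\frac{v(w_n-w_{n-1})}{\lambda^n v(a)}\,e^{-\mathcal{H}_{[-1,n]}(w_{-1},\dots,w_n)}\prod_{i=1}^n dw_i,$$ where $\mathcal{H}_{[-1,n]}(w_{-1},\dots,w_n)=\sum_{i=1}^{n}V_1(w_i-w_{i-1})+\sum_{i=0}^{n-1}V_2(w_{i+1}+w_{i-1}-2w_i)$.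
   Context: Assumptions: (C1) $V_1$ measurable, bounded from below, symmetric, $\lim_{|x|\to\infty}V_1(x)=+\infty$, $\int e^{-2V_1}<\infty$; (C2) $V_2$ measurable, bounded from below, bounded above on $[-\gamma,\gamma]$ for some $\gamma>0$, $\int|x|e^{-V_2(x)}dx<\infty$. Under these assumptions $\mathcal{K}$ is Hilbert–Schmidt, its spectral radius $\lambda>0$ is an isolated eigenvalue with an eigenfunction $v\in L^2(\mathbb{R})$, $v>0$ everywhere (defined pointwise by the eigen-equation), so $p(x,\cdot)$ is a probability density for each $x$. *)

From mathcomp Require Import all_boot all_order all_algebra.
From mathcomp Require Import all_classical all_reals all_analysis.
Import Order.TTheory GRing.Theory Num.Theory.
Import numFieldNormedType.Exports.
Set Implicit Arguments. Unset Strict Implicit. Unset Printing Implicit Defensive.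
Local Open Scope classical_set_scope.
Local Open Scope ring_scope.

Section Defs.
Context {R : realType}.
Local Notation mu := (@lebesgue_measure R).

Definition kern (V1 V2 : R -> R) (x y : R) : R := expR (- V1 y - V2 (y - x)).

Definition intop (k : R -> R -> R) (f : R -> R) (x : R) : R :=
  fine (\int[mu]_y ((k x y * f y)%:E))%E.

Definition L2sq (f : R -> R) : \bar R := (\int[mu]_x ((f x ^+ 2)%:E))%E.

Definition in_L2 (f : R -> R) : Prop :=
  measurable_fun setT f /\ (L2sq f < +oo)%E.

Definition opnorm_sq (k : R -> R -> R) (n : nat) : \bar R :=
  ereal_sup [set L2sq (iter n (intop k) f) |
             f in [set f | measurable_fun setT f /\ (L2sq f <= 1)%E]].

(* lam is the spectral radius of K on L^2 (Gelfand's formula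
   r(K) = lim_n ||K^n||^(1/n)) *)
Definition is_spectral_radius (k : R -> R -> R) (lam : R) : Prop :=
  (fun n : nat => Num.sqrt (fine (opnorm_sq k n.+1)) `^ (n.+1%:R^-1)) @ \oo
    --> lam.

Definition cond_C1 (V1 : R -> R) : Prop :=
  [/\ measurable_fun setT V1,
      (exists m : R, forall x, m <= V1 x),
      (forall x, V1 (- x) = V1 x),
      (forall M : R, exists r : R, forall x, r < `|x| -> M < V1 x)
    & (\int[mu]_x ((expR (- (2 * V1 x)))%:E) < +oo)%E].

Definition cond_C2 (V2 : R -> R) : Prop :=
  [/\ measurable_fun setT V2,
      (exists m : R, forall x, m <= V2 x),
      (exists gamma : R, 0 < gamma /\
         exists M : R, forall x, `|x| <= gamma -> V2 x <= M)
    & (\int[mu]_x ((`|x| * expR (- V2 x))%:E) < +oo)%E].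

Fixpoint chain_int (p : R -> R -> R) (A : nat -> set R) (i n : nat) (x : R)
  : \bar R :=
  match n with
  | 0 => 1%E
  | n'.+1 => (\int[mu]_(y in A i) ((p x y)%:E * chain_int p A i.+1 n' y))%E
  end.

(* (Y_n) is a Markov chain with Y_0 = a and transition kernel p(x,y)dy:
   its finite-dimensional distributions are
   P(Y_0 in A_0, ..., Y_n in A_n)
     = 1_{A_0}(a) \int_{A_1} p(a,y_1) ... \int_{A_n} p(y_{n-1},y_n) dy_n ... dy_1 *)
Definition markov_chain {d : measure_display} {T : measurableType d}
  (P : probability T R) (Y : nat -> T -> R) (a : R) (p : R -> R -> R) : Prop :=
  (forall n, measurable_fun setT (Y n)) /\
  forall (n : nat) (A : nat -> set R), (forall i, measurable (A i)) ->
    P [set w | forall i, (i <= n)%N -> A i (Y i w)] =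
      (((\1_(A 0) a : R))%:E * chain_int p A 1 n a)%E.

Fixpoint iint (n : nat) (A : nat -> set R) (i : nat) (F : seq R -> \bar R)
  : \bar R :=
  match n with
  | 0 => F [::]
  | n'.+1 => (\int[mu]_(w in A i) iint n' A i.+1 (fun s => F (w :: s)))%E
  end.

(* w_(j-1) for the configuration (w_(-1), w_0, w_1, ..., w_n)
   = (b - a, b, s) *)
Definition wcfg (a b : R) (s : seq R) (j : nat) : R := nth 0 [:: b - a, b & s] j.

Definition Hamil (V1 V2 : R -> R) (n : nat) (w : nat -> R) : R :=
  \sum_(1 <= i < n.+1) V1 (w i.+1 - w i)
  + \sum_(0 <= i < n) V2 (w i.+2 + w i - 2 * w i.+1).

End Defs.

From HB Require Import structures.
From mathcomp Require Import all_boot all_order all_algebra.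
From mathcomp Require Import all_classical all_reals all_analysis.
From mathcomp Require Import measurable_realfun lra ring.
Import Order.TTheory GRing.Theory Num.Theory.
Import numFieldNormedType.Exports.
Local Open Scope classical_set_scope.
Local Open Scope ring_scope.

(* By the Markov property, the law of (Y_1, ..., Y_n) is the measure
   C |-> \int p(a,y_1) \int p(y_1,y_2) ... \int p(y_(n-1),y_n) 1_C(y) dy_n ... dy_1:
   both are probability measures on R^n agreeing on boxes.  The event
   {W_i \in A_i, i <= n} only constrains the partial sums b + y_1 + ... + y_i,
   and the translations w_i = w_(i-1) + y_i turn the iterated integral over the
   increments into one over the positions, with integrand the product of the
   p(w_(i-1) - w_(i-2), w_i - w_(i-1)).  For p(x,y) = k(x,y) v(y) / (lam v(x)) the
   values of v telescope to v(w_n - w_(n-1)) / v(a) and the exponents of k add up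
   to -H. *)

Lemma measurable_fun_cons d d' (T : measurableType d) (U : measurableType d')
    n (f : seq T -> U) (y : T) :
  measurable_fun setT (fun t : n.+1.-tuple T => f t) ->
  measurable_fun setT (fun t : n.-tuple T => f (y :: t)).
Proof.
move=> mf; rewrite (_ : (fun t : n.-tuple T => f (y :: t)) =
  (fun t : n.+1.-tuple T => f t) \o (fun t : n.-tuple T => [tuple of y :: t])) //.
by apply: measurableT_comp => //; apply: measurable_cons => //; exact: measurable_cst.
Qed.

Lemma measurable_fun_inv_pos d (T : measurableType d) (R : realType) (f : T -> R) :
  measurable_fun setT f -> (forall x, 0 < f x) ->
  measurable_fun setT (fun x => (f x)^-1).
Proof.
move=> mf f_gt0; rewrite (_ : (fun x => _) = fun x => expR (- ln (f x))); last first.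
  by apply/funext => x; rewrite expRN lnK // posrE.
apply: measurableT_comp; first exact: measurable_expR.
apply: measurableT_comp => //; apply: measurableT_comp => //; exact: measurable_ln.
Qed.

Lemma indic_iff (R : realType) (T1 T2 : Type) (A : set T1) (B : set T2) x y :
  (A x <-> B y) -> \1_A x = \1_B y :> R.
Proof.
move=> AB; rewrite !indicE; have [Ax|nAx] := pselect (A x).
  by rewrite !mem_set //; apply/AB.
by rewrite !memNset // => /AB.
Qed.

Lemma indic_eq1 (R : realType) (T : Type) (A : set T) x :
  (\1_A x)%:E = 1%E :> \bar R <-> A x.
Proof.
split; last by move=> Ax; rewrite indicE mem_set.
rewrite indicE; have [//|nAx] := pselect (A x).
by rewrite memNset // => -[] /eqP; rewrite eq_sym oner_eq0.
Qed.

Section chain_integral.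
Context {R : realType}.
Local Notation mu := (@lebesgue_measure R).
Variable p : R -> R -> R.
Hypothesis mp : measurable_fun setT (fun xy : R * R => p xy.1 xy.2).
Hypothesis p_ge0 : forall x y, 0 <= p x y.

Fixpoint chain_integral (n : nat) (x : R) (f : seq R -> \bar R) : \bar R :=
  match n with
  | 0 => f [::]
  | n'.+1 =>
    (\int[mu]_y ((p x y)%:E * chain_integral n' y (fun s => f (y :: s))))%E
  end.

Lemma chain_integral_ge0 n x f :
  (forall s, 0 <= f s)%E -> (0 <= chain_integral n x f)%E.
Proof.
elim: n x f => [|n IH] x f f_ge0 /=; first exact: f_ge0.
apply: integral_ge0 => y _; apply: mule_ge0; first by rewrite lee_fin.
by apply: IH => s; exact: f_ge0.
Qed.

Lemma eq_chain_integral n x f g : (forall s, size s = n -> f s = g s) ->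
  chain_integral n x f = chain_integral n x g.
Proof.
elim: n x f g => [|n IH] x f g fg /=; first exact: fg.
apply: eq_integral => y _; congr (_ * _)%E; apply: IH => s sn.
by apply: fg => /=; rewrite sn.
Qed.

Lemma chain_integral0 n x : chain_integral n x (fun _ => 0%E) = 0%E.
Proof.
elim: n x => [|n IH] x //=.
by rewrite (eq_integral (fun _ => 0%E)) ?integral0// => y _; rewrite IH mule0.
Qed.

Lemma measurable_chain_integral n (dX : measure_display) (X : measurableType dX)
    (f : X -> seq R -> \bar R) :
  measurable_fun setT (fun zt : X * n.-tuple R => f zt.1 zt.2) ->
  (forall z s, 0 <= f z s)%E ->
  measurable_fun setT (fun zx : X * R => chain_integral n zx.2 (f zx.1)).
Proof.
elim: n dX X f => [|n IH] dX X f mf f_ge0.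
  rewrite (_ : (fun zx : X * R => chain_integral 0 zx.2 (f zx.1)) =
    (fun zt : X * 0.-tuple R => f zt.1 zt.2) \o (fun zx => (zx.1, [tuple]))) //.
  by apply: measurableT_comp => //; exact: measurable_fun_pair.
pose g (zy : X * R) (s : seq R) := f zy.1 (zy.2 :: s).
have mg : measurable_fun setT (fun zt : (X * R) * n.-tuple R => g zt.1 zt.2).
  rewrite (_ : (fun zt : (X * R) * n.-tuple R => g zt.1 zt.2) = (fun zt : X * n.+1.-tuple R => f zt.1 zt.2)
    \o (fun zt : (X * R) * n.-tuple R => (zt.1.1, [tuple of zt.1.2 :: zt.2]))) //.
  apply: measurableT_comp => //; apply: measurable_fun_pair.
    exact: measurableT_comp.
  by apply: measurable_cons => //; exact: measurableT_comp.
pose h (q : (X * R) * R) :=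
  ((p q.1.2 q.2)%:E * chain_integral n q.2 (g (q.1.1, q.2)))%E.
have h_ge0 q : (0 <= h q)%E.
  by apply: mule_ge0; [rewrite lee_fin|apply: chain_integral_ge0 => s; exact: f_ge0].
have mh : measurable_fun setT h.
  apply: emeasurable_funM.
    apply/measurable_EFinP.
    rewrite (_ : (fun q : (X * R) * R => p q.1.2 q.2) = (fun xy : R * R => p xy.1 xy.2)
      \o (fun q : (X * R) * R => (q.1.2, q.2))) //.
    apply: measurableT_comp => //; apply: measurable_fun_pair => //.
    exact: measurableT_comp.
  rewrite (_ : (fun q : (X * R) * R => chain_integral n q.2 (g (q.1.1, q.2))) =
    (fun zx : (X * R) * R => chain_integral n zx.2 (g zx.1))
    \o (fun q : (X * R) * R => ((q.1.1, q.2), q.2))) //.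
  apply: measurableT_comp; first exact: (IH _ _ g mg (fun z s => f_ge0 _ _)).
  apply: measurable_fun_pair => //; apply: measurable_fun_pair => //.
  exact: measurableT_comp.
exact: (measurable_fun_fubini_tonelli_F (m2 := mu) h mh h_ge0).
Qed.

Lemma measurable_chain_integral_dep n (f : R -> seq R -> \bar R) :
  measurable_fun setT (fun yt : R * n.-tuple R => f yt.1 yt.2) ->
  (forall y s, 0 <= f y s)%E ->
  measurable_fun setT (fun y => chain_integral n y (f y)).
Proof.
move=> mf f_ge0; rewrite (_ : (fun y => chain_integral n y (f y)) =
  (fun zx : R * R => chain_integral n zx.2 (f zx.1)) \o (fun y => (y, y))) //.
apply: measurableT_comp; first exact: measurable_chain_integral.
exact: measurable_fun_pair.
Qed.

Lemma chain_integral_nneseries n x (f : nat -> seq R -> \bar R) :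
  (forall k, measurable_fun setT (fun t : n.-tuple R => f k t)) ->
  (forall k s, 0 <= f k s)%E ->
  chain_integral n x (fun s => \sum_(k <oo) f k s)%E =
  (\sum_(k <oo) chain_integral n x (f k))%E.
Proof.
elim: n x f => [|n IH] x f mf f_ge0 //=.
transitivity (\int[mu]_y (\sum_(k <oo)
    ((p x y)%:E * chain_integral n y (fun s => f k (y :: s)))))%E.
  apply: eq_integral => y _; rewrite (IH y (fun k s => f k (y :: s))).
  - by rewrite nneseriesZl // => k _; apply: chain_integral_ge0 => s; exact: f_ge0.
  - by move=> k; exact: measurable_fun_cons.
  - by move=> k s; exact: f_ge0.
apply: integral_nneseries => //.
  move=> k; apply: emeasurable_funM.
    by apply/measurable_EFinP; exact: (measurable_fun_pair2 x mp).
  apply: (@measurable_chain_integral_dep n (fun y s => f k (y :: s))) => [|y s].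
    rewrite (_ : (fun yt : R * n.-tuple R => f k (yt.1 :: yt.2)) =
      (fun t : n.+1.-tuple R => f k t) \o (fun yt : R * n.-tuple R => [tuple of yt.1 :: yt.2])) //.
    by apply: measurableT_comp => //; exact: measurable_cons.
  exact: f_ge0.
move=> k y _; apply: mule_ge0; first by rewrite lee_fin.
by apply: chain_integral_ge0 => s; exact: f_ge0.
Qed.

Fixpoint box_indic (A : nat -> set R) (i : nat) (s : seq R) : \bar R :=
  match s with
  | [::] => 1%E
  | y :: s' => ((\1_(A i) y)%:E * box_indic A i.+1 s')%E
  end.

Lemma box_indicE A i s : box_indic A i s =
  (\1_[set s : seq R | forall j, (j < size s)%N -> A (i + j)%N (nth 0 s j)] s)%:E.
Proof.
elim: s i => [|y s IH] i /=; first by rewrite indicE mem_set.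
rewrite IH; have [Ay|nAy] := pselect (A i y).
  rewrite indicE mem_set // mul1e; congr (_%:E); apply: indic_iff; split.
    move=> H [_|j] /=; first by rewrite addn0.
    by rewrite ltnS -addSnnS; exact: H.
  by move=> H j js; have := H j.+1; rewrite /= ltnS -addSnnS => /(_ js).
rewrite indicE memNset // mul0e; congr (_%:E); apply/esym.
rewrite indicE memNset //= => H; apply: nAy; have := H 0%N isT.
by rewrite addn0.
Qed.

Lemma chain_integral_box_indic n A i x :
  chain_integral n x (box_indic A i) = chain_int p A i n x.
Proof.
elim: n A i x => [|n IH] A i x //=.
rewrite [RHS]integral_mkcond; apply: eq_integral => y _.
rewrite /patch indicE; case: ifPn => yA.
  by rewrite -IH; congr (_ * _)%E; apply: eq_chain_integral => s _; rewrite mul1e.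
rewrite (_ : chain_integral n y _ = 0%E) ?mule0 //.
by rewrite -(chain_integral0 n y); apply: eq_chain_integral => s _; rewrite mul0e.
Qed.

Section chain_law.
Variables (n : nat) (x : R).

(* [insubd] reads a sequence of length [n] as a tuple; other lengths never occur. *)
Definition chain_law (C : set (n.-tuple R)) : \bar R :=
  chain_integral n x (fun s => (\1_C (insubd (nseq_tuple n (0:R)) s))%:E).

Let chain_law0 : chain_law set0 = 0%E.
Proof.
rewrite /chain_law -(chain_integral0 n x).
by apply: eq_chain_integral => s _; rewrite indicE in_set0.
Qed.

Let chain_law_ge0 C : (0 <= chain_law C)%E.
Proof. by apply: chain_integral_ge0 => s; rewrite lee_fin. Qed.

Let chain_law_sigma_additive : semi_sigma_additive chain_law.
Proof.
move=> F mF tF mUF.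
have -> : chain_law (\bigcup_k F k) = (\sum_(k <oo) chain_law (F k))%E.
  rewrite /chain_law -chain_integral_nneseries.
  - by congr chain_integral; apply/funext => s; exact: indic_bigcup.
  - move=> k; rewrite (_ : (fun t : n.-tuple R => _) = EFin \o \1_(F k)).
      by apply/measurable_EFinP; exact: measurable_indic.
    by apply/funext => t /=; rewrite valKd.
  - by move=> k s; rewrite lee_fin.
by apply: is_cvg_nneseries => k _ _; exact: chain_law_ge0.
Qed.

HB.instance Definition _ := isMeasure.Build _ _ _ chain_law
  chain_law0 chain_law_ge0 chain_law_sigma_additive.

End chain_law.
End chain_integral.

Section boxes.
Context {R : realType}.

Definition box n (B : nat -> set R) : set (n.-tuple R) :=
  [set t | forall j : 'I_n, B j (tnth t j)].

Definition boxes n : set (set (n.-tuple R)) :=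
  [set box n B | B in [set B | forall j, measurable (B j)]].

Lemma measurable_box n B : (forall j, measurable (B j)) -> measurable (box n B).
Proof.
move=> mB.
pose F j := if (j < n)%N then [set t : n.-tuple R | B j (nth 0 t j)] else setT.
rewrite (_ : box n B = \bigcap_(j in setT) F j).
  apply: bigcap_measurable; first by exists 0%N.
  move=> j _; rewrite /F; case: ifPn => jn //.
  rewrite (_ : [set t | _] = (fun t : n.-tuple R => tnth t (Ordinal jn)) @^-1` B j).
    by rewrite -[X in measurable X]setTI; exact: measurable_tnth.
  by apply/seteqP; split => t /=; rewrite (tnth_nth 0).
apply/seteqP; split => t /=.
  move=> Bt j _; rewrite /F; case: ifPn => // jn /=.
  by have := Bt (Ordinal jn); rewrite (tnth_nth 0).
by move=> Ft j; have := Ft j I; rewrite /F ltn_ord /= (tnth_nth 0).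
Qed.

Lemma boxes_setI_closed n : setI_closed (boxes n).
Proof.
move=> _ _ [B1 mB1 <-] [B2 mB2 <-].
exists (fun j => B1 j `&` B2 j); first by move=> j; exact: measurableI.
by apply/seteqP; split => t /=; [move=> Bt; split => j; case: (Bt j)|
  move=> [B1t B2t] j; split].
Qed.

Lemma measurable_sub_boxes n :
  (measurable : set (set (n.-tuple R))) `<=` <<s boxes n >>.
Proof.
move=> C; rewrite /measurable /=.
apply: smallest_sub; first exact: smallest_sigma_algebra.
apply: (big_ind (fun S : set (set (n.-tuple R)) => S `<=` <<s boxes n >>)).
- by move=> ? [].
- by move=> S1 S2 h1 h2 X [/h1|/h2].
move=> j _ X [Bj mBj <-]; apply: sub_sigma_algebra.
exists (fun k => if k == nat_of_ord j then Bj else setT).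
  by move=> k; case: ifP.
apply/seteqP; split => t /=.
  by move=> Bt; split => //; have := Bt j; rewrite eqxx.
move=> [_ Bjt] k; case: eqP => // kj.
by rewrite (_ : k = j) //; exact: val_inj.
Qed.

End boxes.

Section partial_sums.
Context {R : realType}.

Fixpoint psum_indic (A : nat -> set R) (i : nat) (c : R) (s : seq R) : \bar R :=
  match s with
  | [::] => 1%E
  | y :: s' => ((\1_(A i) (c + y))%:E * psum_indic A i.+1 (c + y) s')%E
  end.

Lemma psum_indicE A i c s : psum_indic A i c s =
  (\1_[set s : seq R | forall j, (j < size s)%N ->
      A (i + j)%N (c + \sum_(k < j.+1) nth 0 s k)] s)%:E.
Proof.
elim: s i c => [|y s IH] i c /=; first by rewrite indicE mem_set.
rewrite IH; have [Ay|nAy] := pselect (A i (c + y)).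
  rewrite indicE mem_set // mul1e; congr (_%:E); apply: indic_iff; split.
    move=> H [_|j] /=; first by rewrite big_ord1 addn0.
    rewrite ltnS => js; rewrite big_ord_recl /= addrA -addSnnS.
    by under eq_bigr do rewrite /bump /=; exact: H.
  move=> H j js; have := H j.+1; rewrite /= ltnS big_ord_recl /= addrA -addSnnS.
  by move=> /(_ js); under eq_bigr do rewrite /bump /=.
rewrite indicE memNset // mul0e; congr (_%:E); apply/esym.
rewrite indicE memNset //= => H; apply: nAy; have := H 0%N isT.
by rewrite big_ord1 addn0.
Qed.

Lemma psum_indic_ge0 A i c s : (0 <= psum_indic A i c s)%E.
Proof. by rewrite psum_indicE lee_fin. Qed.

Lemma measurable_psum_indic A : (forall i, measurable (A i)) -> forall n i,
  measurable_fun setT (fun ct : R * n.-tuple R => psum_indic A i ct.1 ct.2).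
Proof.
move=> mA; elim=> [|n IH] i.
  rewrite (_ : (fun ct : R * 0.-tuple R => _) = cst 1%E); first exact: measurable_cst.
  by apply/funext => -[c t]; rewrite (tuple0 t).
pose next (ct : R * n.+1.-tuple R) := (ct.1 + thead ct.2, [tuple of behead ct.2]).
have mnext1 : measurable_fun setT (fun ct => (next ct).1).
  apply: measurable_funD => //; apply: measurableT_comp => //.
  exact: measurable_tnth.
rewrite (_ : (fun ct : R * n.+1.-tuple R => _) = fun ct =>
    ((\1_(A i) (next ct).1)%:E * psum_indic A i.+1 (next ct).1 (next ct).2)%E).
  apply: emeasurable_funM.
    apply/measurable_EFinP.
    exact: (measurableT_comp (@measurable_indic _ _ R setT _ (mA i)) mnext1).
  apply: (measurableT_comp (IH i.+1)); apply: measurable_fun_pair => //.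
  exact: (measurableT_comp (@measurable_behead _ _ n) measurable_snd).
by apply/funext => -[c t] /=; rewrite [in LHS](tuple_eta t).
Qed.

End partial_sums.

Section markov_chain_law.
Context {R : realType} {d : measure_display} {T : measurableType d}.
Variables (P : probability T R) (Y : nat -> T -> R) (a : R) (p : R -> R -> R).
Hypothesis mp : measurable_fun setT (fun xy : R * R => p xy.1 xy.2).
Hypothesis p_ge0 : forall x y, 0 <= p x y.
Hypothesis YM : markov_chain P Y a p.
Variable n : nat.

Definition chain_tuple (om : T) : n.-tuple R := [tuple Y j.+1 om | j < n].

Lemma measurable_chain_tuple : measurable_fun setT chain_tuple.
Proof.
apply/measurable_fun_tnthP => j.
rewrite (_ : _ \o _ = Y j.+1); first exact: YM.1.
by apply/funext => om /=; rewrite tnth_mktuple.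
Qed.

HB.instance Definition _ :=
  isMeasurableFun.Build _ _ _ _ chain_tuple measurable_chain_tuple.

Lemma distribution_chain_tuple_box C : boxes n C ->
  distribution P chain_tuple C = chain_law p n a C.
Proof.
move=> [B mB <-].
pose A i := if i is j.+1 then B j else setT.
have mA i : measurable (A i) by case: i => [|j]; rewrite /A //; exact: mB.
transitivity (P [set om | forall i, (i <= n)%N -> A i (Y i om)]).
  congr (P _); apply/seteqP; split => om /=.
    by move=> H [|j] //= jn; have := H (Ordinal jn); rewrite tnth_mktuple.
  by move=> H j; have := H j.+1 (ltn_ord j); rewrite tnth_mktuple.
rewrite YM.2 // indicE mem_set // mul1e -chain_integral_box_indic.
apply: eq_chain_integral => s sn; rewrite box_indicE; congr (_%:E).
have tnthE (j : 'I_n) : tnth (insubd (nseq_tuple n 0) s) j = nth 0 s j.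
  by rewrite (tnth_nth 0) val_insubd sn eqxx.
apply: indic_iff; split => H j.
  by rewrite tnthE; have := H j; rewrite sn => /(_ (ltn_ord j)).
by rewrite sn => js; have := H (Ordinal js); rewrite tnthE.
Qed.

Lemma distribution_chain_tuple C : measurable C ->
  distribution P chain_tuple C = chain_law p n a C.
Proof.
move=> mC; apply: (@g_sigma_algebra_measure_unique _ _ _ (boxes n)
  _ (fun _ => setT)) => //.
- by move=> _ [B mB <-]; exact: measurable_box.
- move=> k; exists (fun _ => setT) => //.
  by apply/seteqP; split => // t _ j.
- exact: bigcup_const.
- exact: boxes_setI_closed.
- exact: distribution_chain_tuple_box.
- by move=> k /=; rewrite probability_setT ltry.
- exact: measurable_sub_boxes.
Qed.

Lemma sum_chain_tuple om j : (j < n)%N ->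
  \sum_(k < j.+1) nth 0 (chain_tuple om) k = \sum_(1 <= k < j.+2) Y k om.
Proof.
move=> jn; rewrite big_add1 /= big_mkord; apply: eq_bigr => k _.
have kn := leq_trans (ltn_ord k) jn.
by have := tnth_mktuple (fun j : 'I_n => Y j.+1 om) (Ordinal kn); rewrite (tnth_nth 0).
Qed.

Lemma probability_partial_sums (A : nat -> set R) b :
  (forall i, measurable (A i)) ->
  P [set om | forall i, (1 <= i <= n)%N -> A i (b + \sum_(1 <= k < i.+1) Y k om)] =
  chain_integral p n a (psum_indic A 1 b).
Proof.
move=> mA; pose C := [set t : n.-tuple R | psum_indic A 1 b t = 1%E].
have mC : measurable C.
  have mpsum : measurable_fun setT (fun t : n.-tuple R => psum_indic A 1 b t).
    rewrite (_ : (fun t => _) = (fun ct : R * n.-tuple R => psum_indic A 1 ct.1 ct.2)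
      \o (fun t => (b, t))) //.
    apply: measurableT_comp; first exact: measurable_psum_indic.
    exact: measurable_fun_pair.
  by have := mpsum measurableT [set 1%E] (emeasurable_set1 _); rewrite setTI.
transitivity (distribution P chain_tuple C).
  congr (P _); apply/seteqP; split => om /=; rewrite /C /= psum_indicE.
    move=> H; apply/indic_eq1 => j; rewrite size_tuple card_ord => jn.
    by have := H j.+1; rewrite /= jn => /(_ isT); rewrite sum_chain_tuple.
  move=> /indic_eq1 H [//|j] /andP[_ jn].
  by have := H j; rewrite size_tuple card_ord => /(_ jn); rewrite sum_chain_tuple.
rewrite distribution_chain_tuple // /chain_law; apply: eq_chain_integral => s sn.
have ts : val (insubd (nseq_tuple n 0) s) = s by rewrite val_insubd sn eqxx.
rewrite -[in RHS]ts [RHS]psum_indicE; congr (_%:E); apply: indic_iff.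
by rewrite /C /= psum_indicE; exact: indic_eq1.
Qed.

End markov_chain_law.

Section translation.
Context {R : realType}.
Local Notation mu := (@lebesgue_measure R).
Variable c : R.

Let subc : R -> measurableTypeR R := fun w => w - c.

Let measurable_subc : measurable_fun setT subc.
Proof. by apply: measurable_funB => //; exact: measurable_cst. Qed.

Lemma lebesgue_measureB (A : set R) : measurable A ->
  pushforward mu subc A = mu A.
Proof.
move=> mA; apply/esym/lebesgue_measure_unique => //= _ [[x y] _ <-].
rewrite /pushforward (_ : subc @^-1` _ = `]x + c, y + c]%classic); last first.
  by apply/seteqP; split => w /=; rewrite !in_itv /= /subc => /andP[? ?];
    apply/andP; split; lra.
rewrite !lebesgue_measure_itv /= !lte_fin ltrD2r.
by case: ifP => // _; rewrite -!EFinD; congr (_%:E); lra.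
Qed.

Lemma ge0_integral_translate (h : R -> \bar R) :
  measurable_fun setT h -> (forall y, 0 <= h y)%E ->
  (\int[mu]_y h y = \int[mu]_w h (w - c)%R)%E.
Proof.
move=> mh h_ge0.
transitivity (\int[pushforward mu subc]_y h y)%E.
  apply: eq_measure_integral => A mA _; exact/esym/lebesgue_measureB.
rewrite (@ge0_integral_pushforward _ _ (measurableTypeR R) (measurableTypeR R) R
  subc measurable_subc mu setT h measurableT mh (fun y _ => h_ge0 y)).
by rewrite preimage_setT.
Qed.

End translation.

Lemma eq_iint {R : realType} n (A : nat -> set R) i (F G : seq R -> \bar R) :
  (forall s, size s = n -> F s = G s) -> iint n A i F = iint n A i G.
Proof.
elim: n i F G => [|n IH] i F G FG /=; first exact: FG.
by apply: eq_integral => w _; apply: IH => s sn; apply: FG => /=; rewrite sn.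
Qed.

Section walk_density.
Context {R : realType}.
Local Notation mu := (@lebesgue_measure R).
Variable p : R -> R -> R.
Hypothesis mp : measurable_fun setT (fun xy : R * R => p xy.1 xy.2).
Hypothesis p_ge0 : forall x y, 0 <= p x y.

(* Density of the positions [s] of a walk now at [b] whose last step was [a]. *)
Fixpoint walk_density (a b : R) (s : seq R) : R :=
  match s with
  | [::] => 1
  | w :: s' => p a (w - b) * walk_density (w - b) w s'
  end.

Variable A : nat -> set R.
Hypothesis mA : forall i, measurable (A i).

Lemma measurable_psum_integrand n i a b :
  measurable_fun setT (fun y : R =>
    ((p a y * \1_(A i) (b + y))%:E * chain_integral p n y (psum_indic A i.+1 (b + y)))%E).
Proof.
apply: emeasurable_funM.
  apply/measurable_EFinP; apply: measurable_funM.
    exact: (measurable_fun_pair2 a mp).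
  apply: (measurableT_comp (@measurable_indic _ _ R setT _ (mA i))).
  by apply: measurable_funD => //; exact: measurable_cst.
apply: (@measurable_chain_integral_dep R p mp p_ge0 n
  (fun y s => psum_indic A i.+1 (b + y) s)); last by move=> *; exact: psum_indic_ge0.
rewrite (_ : (fun yt : R * n.-tuple R => _) =
  (fun ct : R * n.-tuple R => psum_indic A i.+1 ct.1 ct.2)
  \o (fun yt : R * n.-tuple R => (b + yt.1, yt.2))) //.
apply: measurableT_comp; first exact: measurable_psum_indic.
by apply: measurable_fun_pair => //; exact: measurable_funD.
Qed.

(* Substituting [w = b + y] in each integral turns the increments into positions. *)
Lemma chain_integral_psum_indic n : forall (c a b : R) i, 0 <= c ->
  (c%:E * chain_integral p n a (psum_indic A i b) =
   iint n A i (fun s => (c * walk_density a b s)%:E))%E.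
Proof.
elim: n => [|n IH] c a b i c_ge0 /=; first by rewrite mule1 mulr1.
have integrand_ge0 y : (0 <= (p a y * \1_(A i) (b + y))%:E
    * chain_integral p n y (psum_indic A i.+1 (b + y)))%E.
  apply: mule_ge0; first by rewrite lee_fin mulr_ge0 // indicE ler0n.
  by apply: (@chain_integral_ge0 _ p p_ge0) => s; exact: psum_indic_ge0.
transitivity (c%:E * \int[mu]_y ((p a y * \1_(A i) (b + y))%:E
    * chain_integral p n y (psum_indic A i.+1 (b + y))))%E.
  congr (_ * _)%E; apply: eq_integral => y _; rewrite indicE.
  have [yA|yA] := boolP (b + y \in A i).
    rewrite mulr1; congr (_ * _)%E; apply: eq_chain_integral => s _ /=.
    by rewrite mul1e.
  rewrite mulr0 mul0e (_ : chain_integral p n y _ = 0%E) ?mule0 //.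
  rewrite -(chain_integral0 p n y); apply: eq_chain_integral => s _ /=.
  by rewrite mul0e.
rewrite -ge0_integralZl_EFin //; last exact: measurable_psum_integrand.
rewrite (ge0_integral_translate b); last 2 first.
- exact: emeasurable_funM (measurable_cst _) (measurable_psum_integrand n i a b).
- by move=> y; apply: mule_ge0; [rewrite lee_fin|exact: integrand_ge0].
rewrite [RHS]integral_mkcond; apply: eq_integral => w _.
have -> : b + (w - b) = w by rewrite addrC subrK.
rewrite /patch indicE; case: ifPn => wA /=; last by rewrite mulr0 mul0e mule0.
rewrite mulr1 muleA -EFinM IH ?mulr_ge0 //.
by apply: eq_iint => s _; rewrite mulrA.
Qed.

End walk_density.

Section doob_transform.
Context {R : realType}.
Variables (k : R -> R -> R) (lam : R) (v : R -> R).
Hypothesis lam_gt0 : 0 < lam.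
Hypothesis v_gt0 : forall x, 0 < v x.

Definition doob_transform (x y : R) : R := k x y * v y / (lam * v x).

Lemma doob_transform_ge0 : (forall x y, 0 <= k x y) ->
  forall x y, 0 <= doob_transform x y.
Proof.
move=> k_ge0 x y; apply: divr_ge0; first by rewrite mulr_ge0 // ltW.
by rewrite ltW // mulr_gt0.
Qed.

Lemma measurable_doob_transform :
  measurable_fun setT (fun xy : R * R => k xy.1 xy.2) -> measurable_fun setT v ->
  measurable_fun setT (fun xy : R * R => doob_transform xy.1 xy.2).
Proof.
move=> mk mv; apply: measurable_funM; first apply: measurable_funM => //.
- exact: measurableT_comp.
- apply: (@measurable_fun_inv_pos _ _ R (fun xy : R * R => lam * v xy.1)).
    by apply: measurable_funM => //; exact: measurableT_comp.
  by move=> xy; rewrite mulr_gt0.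
Qed.

End doob_transform.
Arguments doob_transform_ge0 {R k lam v}.
Arguments measurable_doob_transform {R k lam v}.

Section kern.
Context {R : realType}.
Variables V1 V2 : R -> R.

Lemma measurable_kern : measurable_fun setT V1 -> measurable_fun setT V2 ->
  measurable_fun setT (fun xy : R * R => kern V1 V2 xy.1 xy.2).
Proof.
move=> mV1 mV2; apply: measurableT_comp; first exact: measurable_expR.
apply: measurable_funB; first by apply: measurableT_comp => //; exact: measurableT_comp.
by apply: measurableT_comp => //; exact: measurable_funB.
Qed.

Lemma wcfg_cons (a b w : R) s j : wcfg a b (w :: s) j.+1 = wcfg (w - b) w s j.
Proof. by case: j => [|j] //=; rewrite /wcfg /= opprB addrC subrK. Qed.

Lemma Hamil_cons m (w : nat -> R) : Hamil V1 V2 m.+1 w =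
  V1 (w 2%N - w 1%N) + V2 (w 2%N + w 0%N - 2 * w 1%N) + Hamil V1 V2 m (fun j => w j.+1).
Proof.
by rewrite /Hamil [X in X + _ = _]big_nat_recl // [X in _ + X = _]big_nat_recl //; ring.
Qed.

Variables (lam : R) (v : R -> R).
Hypothesis lam_gt0 : 0 < lam.
Hypothesis v_gt0 : forall x, 0 < v x.

(* The factors v telescope along the walk. *)
Lemma walk_density_doob_kern a b s :
  walk_density (doob_transform (kern V1 V2) lam v) a b s =
  v (wcfg a b s (size s).+1 - wcfg a b s (size s)) / (lam ^+ size s * v a)
  * expR (- Hamil V1 V2 (size s) (wcfg a b s)).
Proof.
have v_neq0 x : v x != 0 by rewrite gt_eqF.
have lam_neq0 : lam != 0 by rewrite gt_eqF.
elim: s a b => [|w s IH] a b /=.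
  rewrite /Hamil !big_geq // addr0 oppr0 expR0 mulr1 expr0 mul1r /wcfg /=.
  by rewrite opprB addrC subrK divff.
rewrite IH Hamil_cons.
rewrite (_ : (fun j => wcfg a b (w :: s) j.+1) = wcfg (w - b) w s); last first.
  by apply/funext => j; rewrite wcfg_cons.
rewrite !wcfg_cons (_ : wcfg (w - b) w s 1 = w) // (_ : wcfg a b (w :: s) 0 = b - a) //.
rewrite (_ : wcfg (w - b) w s 0 = b); last by rewrite /wcfg /= opprB addrC subrK.
rewrite /doob_transform /kern (_ : w + (b - a) - 2 * b = w - b - a); last by ring.
set H := Hamil V1 V2 (size s) _.
rewrite (_ : - (V1 (w - b) + V2 (w - b - a) + H) =
  (- V1 (w - b) - V2 (w - b - a)) + - H); last by ring.
rewrite !expRD exprS.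
have lamn_neq0 : lam ^+ size s != 0 by rewrite expf_neq0.
by field; rewrite lam_neq0 !v_neq0 lamn_neq0.
Qed.

End kern.
Arguments measurable_kern {R V1 V2}.

(* Only measurability and positivity of the data enter: the eigen-equation makes
   [p(x, .)] a probability density, which the chain needs to exist but the
   formula does not. *)
Theorem proposition2p1 (R : realType) (V1 V2 : R -> R) (lam : R) (v : R -> R) :
  cond_C1 V1 -> cond_C2 V2 ->
  0 < lam -> is_spectral_radius (kern V1 V2) lam ->
  in_L2 v -> (forall x, 0 < v x) ->
  (forall x, (\int[@lebesgue_measure R]_y ((kern V1 V2 x y * v y)%:E))%E
             = (lam * v x)%:E) ->
  forall (a b : R) (d : measure_display) (T : measurableType d)
         (P : probability T R) (Y : nat -> T -> R),
  markov_chain P Y a (fun x y => kern V1 V2 x y * v y / (lam * v x)) ->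
  let W := fun (n : nat) (om : T) => b + \sum_(1 <= i < n.+1) Y i om in
  forall (n : nat) (A : nat -> set R), (forall i, measurable (A i)) ->
    P [set om | forall i, (1 <= i <= n)%N -> A i (W i om)] =
    iint n A 1 (fun s =>
      ((v (wcfg a b s n.+1 - wcfg a b s n) / (lam ^+ n * v a))
       * expR (- Hamil V1 V2 n (wcfg a b s)))%:E).
Proof.
move=> [mV1 _ _ _ _] [mV2 _ _ _] lam_gt0 _ [mv _] v_gt0 _ a b d T P Y YM W n A mA.
have p_ge0 := @doob_transform_ge0 _ (kern V1 V2) _ _ lam_gt0 v_gt0 (fun x y => expR_ge0 _).
have mp := measurable_doob_transform lam_gt0 v_gt0 (measurable_kern mV1 mV2) mv.
rewrite /W (probability_partial_sums _ _ _ _ mp p_ge0 YM) //.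
rewrite -[chain_integral _ _ _ _]mul1e chain_integral_psum_indic //.
by apply: eq_iint => s <-; rewrite mul1r walk_density_doob_kern.
Qed.
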